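(* Let $N\in\mathbb N$, $p>1$, and $\mathfrak h_{p,N}(x)=\sum_{n\in\mathbb Z,\ |x-n|>N}|\mathrm{sinc}(x-n)|^p$ for $x\in\mathbb R$. (a) If $N\ge \frac1\pi\sqrt{(p+2)(1+p^{-1})}-\frac12$, then $x=1/2$ is a local maximum point of $\mathfrak h_{p,N}$. (b) If $p\le \frac18\big(9\pi^2+\sqrt{16-216\pi^2+81\pi^4}-12\big)\ (\approx 19.1019)$, then $x=1/2$ is a local maximum point of $\mathfrak h_{p,N}$ for every $N\in\mathbb N$.
   Context: $\mathrm{sinc}(x)=\frac{\sin(\pi x)}{\pi x}$ for $x\neq0$ and $\mathrm{sinc}(0)=1$. *)

From Stdlib Require Import Reals ZArith.
From Coquelicot Require Import Coquelicot.
Open Scope R_scope.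

Definition sinc (x : R) : R :=
  if Req_EM_T x 0 then 1 else sin (PI * x) / (PI * x).

(* |y|^p for real p > 0, with the convention 0^p = 0
   (Stdlib's Rpower 0 p = exp (p * ln 0) = 1 would be wrong). *)
Definition abs_pow (y p : R) : R :=
  if Req_EM_T y 0 then 0 else Rpower (Rabs y) p.

Definition h_term (p : R) (N : nat) (x : R) (n : Z) : R :=
  if Rlt_dec (INR N) (Rabs (x - IZR n)) then abs_pow (sinc (x - IZR n)) p else 0.

Definition h (p : R) (N : nat) (x : R) : R :=
  Series (fun k : nat => h_term p N x (Z.of_nat k))
  + Series (fun k : nat => h_term p N x (- Z.of_nat k - 1)%Z).

Definition local_max_point (f : R -> R) (x0 : R) : Prop :=
  exists eps : R, 0 < eps /\ forall x : R, Rabs (x - x0) < eps -> f x <= f x0.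

(* Write x = 1/2 + t with |t| < 1/2.  Since |sin (PI (x - n))| = cos (PI t) for every
   integer n, the nonzero terms of h_{p,N}(1/2 + t) are (cos (PI t) / (PI d))^p with d
   running over b - t and b + t, b = N + 1/2 + k, k >= 0; so it suffices that each such
   pair is maximal at t = 0.  Writing t = b v, the pair equals
   (PI b)^-p cos (PI t)^p ((1 - v)^-p + (1 + v)^-p), and the bounds
   cos x <= exp (-x^2/2), 1/(1 + u) <= exp (u^2 - u) and cosh y <= exp (y^2/2) bound it by
   2 (PI b)^-p exp (p v^2 (p + 2 - (PI b)^2) / 2), which is at most its value at t = 0 as
   soon as (PI b)^2 >= p + 2.  The threshold in (a) guarantees this for
   b >= N + 1/2, and the bound on p in (b) makes that threshold at most 1. *)

From Stdlib Require Import Reals ZArith Lra Lia.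
From Coquelicot Require Import Coquelicot.
Open Scope R_scope.

Lemma exp_le_compat (x y : R) : x <= y -> exp x <= exp y.
Proof. intros [Hlt| ->]; [left; apply exp_increasing|]; lra. Qed.

Lemma Rpower_exp (a p : R) : Rpower (exp a) p = exp (p * a).
Proof. unfold Rpower; rewrite ln_exp; reflexivity. Qed.

Lemma Rpower_le_exp (x y p : R) : 0 <= p -> 0 < x <= exp y -> Rpower x p <= exp (p * y).
Proof. intros Hp Hx; rewrite <- Rpower_exp; apply Rle_Rpower_l; assumption. Qed.

Lemma Rpower_pos (x p : R) : 0 < Rpower x p.
Proof. apply exp_pos. Qed.

Lemma le_of_is_derive_nonneg (f df : R -> R) (a b : R) :
  (forall x, a <= x <= b -> is_derive f x (df x)) ->
  (forall x, a <= x <= b -> 0 <= df x) ->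
  a <= b -> f a <= f b.
Proof.
  intros Hd Hpos Hab.
  destruct (MVT_gen f a b df) as [c [Hc Hmvt]];
    rewrite ?Rmin_left, ?Rmax_right in * by lra.
  - intros x Hx; apply Hd; lra.
  - intros x Hx; apply continuity_pt_filterlim.
    apply (ex_derive_continuous (K := R_AbsRing) (V := R_NormedModule)).
    exists (df x); apply Hd; lra.
  - assert (0 <= df c * (b - a)) by (apply Rmult_le_pos; [apply Hpos|]; lra).
    lra.
Qed.

Lemma mul_cos_le_sin (x : R) : 0 <= x <= PI -> x * cos x <= sin x.
Proof.
  intros Hx.
  enough (sin 0 - 0 * cos 0 <= sin x - x * cos x) by (rewrite sin_0 in *; lra).
  apply (le_of_is_derive_nonneg (fun y => sin y - y * cos y) (fun y => y * sin y));
    [| |lra].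
  - intros y _; auto_derive; [easy| ring].
  - intros y Hy; apply Rmult_le_pos; [|apply sin_ge_0]; lra.
Qed.

Lemma cos_le_exp_neg_sqr_half (x : R) : 0 <= x <= PI -> cos x <= exp (- (x ^ 2 / 2)).
Proof.
  intros Hx.
  assert (Hmono : - (cos 0 * exp (0 ^ 2 / 2)) <= - (cos x * exp (x ^ 2 / 2))).
  { apply (le_of_is_derive_nonneg (fun y => - (cos y * exp (y ^ 2 / 2)))
             (fun y => (sin y - y * cos y) * exp (y ^ 2 / 2))); [| |lra].
    - intros y _; auto_derive; [easy|].
      replace (y * (y * 1) * / 2) with (y ^ 2 / 2) by field; field.
    - intros y Hy; apply Rmult_le_pos; [|left; apply exp_pos].
      pose proof (mul_cos_le_sin y ltac:(lra)); lra. }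
  rewrite cos_0, pow_i, Rdiv_0_l, exp_0 in Hmono by lia.
  rewrite exp_Ropp. pose proof (exp_pos (x ^ 2 / 2)).
  apply (Rmult_le_reg_r (exp (x ^ 2 / 2))); [lra|].
  rewrite Rinv_l by lra; lra.
Qed.

Lemma cos_le_exp_neg_sqr_half_abs (x : R) : Rabs x <= PI -> cos x <= exp (- (x ^ 2 / 2)).
Proof.
  intros Hx.
  rewrite <- (pow2_abs x).
  destruct (Rle_or_lt 0 x).
  - rewrite Rabs_right in * by lra; apply cos_le_exp_neg_sqr_half; lra.
  - rewrite Rabs_left in * by lra; rewrite <- cos_neg; apply cos_le_exp_neg_sqr_half; lra.
Qed.

Lemma inv_one_add_le_exp (u : R) : -1 / 2 <= u <= 1 / 2 -> / (1 + u) <= exp (u ^ 2 - u).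
Proof.
  intros Hu.
  enough (H1 : 1 <= (1 + u) * exp (u ^ 2 - u)).
  { pose proof (exp_pos (u ^ 2 - u)).
    apply (Rmult_le_reg_l (1 + u)); [lra|]. rewrite Rinv_r by lra; lra. }
  destruct (Rle_or_lt 0 u).
  - replace 1 with ((1 + 0) * exp (0 ^ 2 - 0)) at 1
      by (rewrite pow_i, Rminus_0_r, exp_0 by lia; ring).
    apply (le_of_is_derive_nonneg (fun y => (1 + y) * exp (y ^ 2 - y))
             (fun y => y * (1 + 2 * y) * exp (y ^ 2 - y))); [| |lra].
    + intros y _; auto_derive; [easy|].
      replace (y * (y * 1) + - y) with (y ^ 2 - y) by ring; ring.
    + intros y Hy; apply Rmult_le_pos; [nra| left; apply exp_pos].
  - replace 1 with ((1 - 0) * exp (0 ^ 2 + 0)) at 1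
      by (rewrite pow_i, Rplus_0_r, exp_0 by lia; ring).
    replace ((1 + u) * exp (u ^ 2 - u)) with ((1 - (- u)) * exp ((- u) ^ 2 + - u))
      by (f_equal; [|f_equal]; ring).
    apply (le_of_is_derive_nonneg (fun y => (1 - y) * exp (y ^ 2 + y))
             (fun y => y * (1 - 2 * y) * exp (y ^ 2 + y))); [| |lra].
    + intros y _; auto_derive; [easy|].
      replace (y * (y * 1) + y) with (y ^ 2 + y) by ring; ring.
    + intros y Hy; apply Rmult_le_pos; [nra| left; apply exp_pos].
Qed.

Lemma exp_sub_exp_opp_le (y : R) : 0 <= y -> exp y - exp (- y) <= y * (exp y + exp (- y)).
Proof.
  intros Hy.
  enough (0 * (exp 0 + exp (- 0)) - (exp 0 - exp (- 0))
          <= y * (exp y + exp (- y)) - (exp y - exp (- y))) by (rewrite Ropp_0 in *; lra).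
  apply (le_of_is_derive_nonneg (fun z => z * (exp z + exp (- z)) - (exp z - exp (- z)))
           (fun z => z * (exp z - exp (- z)))); [| |lra].
  - intros z _; auto_derive; [easy| ring].
  - intros z Hz; apply Rmult_le_pos; [lra|].
    pose proof (exp_le_compat (- z) z ltac:(lra)); lra.
Qed.

Lemma exp_add_exp_opp_le (y : R) : exp y + exp (- y) <= 2 * exp (y ^ 2 / 2).
Proof.
  assert (Hnonneg : forall z, 0 <= z -> exp z + exp (- z) <= 2 * exp (z ^ 2 / 2)).
  { intros z Hz.
    assert (Hmono : - ((exp 0 + exp (- 0)) * exp (- (0 ^ 2 / 2)))
                    <= - ((exp z + exp (- z)) * exp (- (z ^ 2 / 2)))).
    { apply (le_of_is_derive_nonneg (fun w => - ((exp w + exp (- w)) * exp (- (w ^ 2 / 2))))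
               (fun w => (w * (exp w + exp (- w)) - (exp w - exp (- w))) * exp (- (w ^ 2 / 2))));
        [| |lra].
      - intros w _; auto_derive; [easy|].
        replace (- (w * (w * 1) * / 2)) with (- (w ^ 2 / 2)) by field; field.
      - intros w Hw; apply Rmult_le_pos; [|left; apply exp_pos].
        pose proof (exp_sub_exp_opp_le w ltac:(lra)); lra. }
    rewrite Ropp_0, pow_i, Rdiv_0_l, Ropp_0, exp_0 in Hmono by lia.
    rewrite (exp_Ropp (z ^ 2 / 2)) in Hmono. pose proof (exp_pos (z ^ 2 / 2)).
    assert (exp (z ^ 2 / 2) * / exp (z ^ 2 / 2) = 1) by (apply Rinv_r; lra).
    nra. }
  destruct (Rle_or_lt 0 y); [now apply Hnonneg|].
  rewrite <- (Ropp_involutive y) at 1.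
  rewrite Rplus_comm, <- (pow2_abs y), Rabs_left by lra.
  apply Hnonneg; lra.
Qed.

Lemma exp_pair_le_two (p a v : R) : 0 <= p -> p + 2 <= a ^ 2 ->
  exp (- (p * (a * v) ^ 2 / 2)) * (exp (p * (v ^ 2 + v)) + exp (p * (v ^ 2 - v))) <= 2.
Proof.
  intros Hp Ha.
  replace (exp (- (p * (a * v) ^ 2 / 2)) * (exp (p * (v ^ 2 + v)) + exp (p * (v ^ 2 - v))))
    with (exp (p * v ^ 2 - p * (a * v) ^ 2 / 2) * (exp (p * v) + exp (- (p * v))))
    by (rewrite !Rmult_plus_distr_l, <- !exp_plus; f_equal; f_equal; ring).
  pose proof (exp_add_exp_opp_le (p * v)).
  pose proof (exp_pos (p * v ^ 2 - p * (a * v) ^ 2 / 2)).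
  apply Rle_trans with (2 * exp (p * v ^ 2 - p * (a * v) ^ 2 / 2 + (p * v) ^ 2 / 2)).
  { rewrite exp_plus; nra. }
  (* the exponent is v^2 p (p + 2 - a^2) / 2 <= 0 *)
  enough (exp (p * v ^ 2 - p * (a * v) ^ 2 / 2 + (p * v) ^ 2 / 2) <= exp 0)
    by (rewrite exp_0 in *; lra).
  apply exp_le_compat.
  assert (0 <= p * v ^ 2) by (apply Rmult_le_pos; [lra| apply pow2_ge_0]).
  nra.
Qed.

Definition half_term (p t d : R) : R := Rpower (cos (PI * t) / (PI * d)) p.

Lemma cos_PI_mul_pos (t : R) : Rabs t < 1 / 2 -> 0 < cos (PI * t).
Proof.
  intros Ht. pose proof PI_RGT_0. apply Rabs_lt_between in Ht.
  apply cos_gt_0; nra.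
Qed.

Lemma half_term_pair_le (p b t : R) :
  0 <= p -> 0 < b -> Rabs t <= b / 2 -> Rabs t < 1 / 2 -> p + 2 <= (PI * b) ^ 2 ->
  half_term p t (b - t) + half_term p t (b + t) <= 2 * half_term p 0 b.
Proof.
  intros Hp Hb Htb Ht Hpb.
  pose proof PI_RGT_0 as HPI.
  pose proof (cos_PI_mul_pos t Ht) as Hcos.
  set (v := t / b).
  assert (Htv : t = b * v) by (unfold v; field; lra).
  assert (Hv : -1 / 2 <= v <= 1 / 2).
  { apply Rabs_le_between in Htb. rewrite Htv in Htb. nra. }
  assert (Hscale : forall s, 0 < s -> half_term p t (b * s)
            = Rpower (cos (PI * t)) p * Rpower (/ (PI * b)) p * Rpower (/ s) p).
  { intros s Hs. unfold half_term.
    assert (0 < / (PI * b)) by (apply Rinv_0_lt_compat; nra).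
    assert (0 < / s) by (apply Rinv_0_lt_compat; lra).
    rewrite !Rpower_mult_distr by (try apply Rmult_lt_0_compat; assumption).
    f_equal; field; split; lra. }
  assert (Hcenter : half_term p 0 b = Rpower (/ (PI * b)) p).
  { unfold half_term; rewrite Rmult_0_r, cos_0; f_equal; field; lra. }
  assert (Hc : Rpower (cos (PI * t)) p <= exp (- (p * (PI * b * v) ^ 2 / 2))).
  { replace (- (p * (PI * b * v) ^ 2 / 2)) with (p * - ((PI * t) ^ 2 / 2))
      by (rewrite Htv; field).
    apply Rpower_le_exp; [lra|]. split; [lra|].
    apply cos_le_exp_neg_sqr_half_abs. apply Rabs_lt_between in Ht.
    apply Rabs_le_between; nra. }
  assert (Hminus : Rpower (/ (1 - v)) p <= exp (p * (v ^ 2 + v))).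
  { replace (1 - v) with (1 + - v) by ring.
    replace (v ^ 2 + v) with ((- v) ^ 2 - - v) by ring.
    apply Rpower_le_exp; [lra|]. split; [apply Rinv_0_lt_compat; lra|].
    apply inv_one_add_le_exp; lra. }
  assert (Hplus : Rpower (/ (1 + v)) p <= exp (p * (v ^ 2 - v))).
  { apply Rpower_le_exp; [lra|]. split; [apply Rinv_0_lt_compat; lra|].
    apply inv_one_add_le_exp; lra. }
  replace (b - t) with (b * (1 - v)) by (rewrite Htv; ring).
  replace (b + t) with (b * (1 + v)) by (rewrite Htv; ring).
  rewrite !Hscale, Hcenter by lra.
  pose proof (exp_pair_le_two p (PI * b) v Hp Hpb).
  pose proof (Rpower_pos (cos (PI * t)) p).
  pose proof (Rpower_pos (/ (PI * b)) p).
  pose proof (Rpower_pos (/ (1 - v)) p).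
  pose proof (Rpower_pos (/ (1 + v)) p).
  set (C := Rpower (/ (PI * b)) p) in *.
  apply Rle_trans with (C * (exp (- (p * (PI * b * v) ^ 2 / 2))
                              * (exp (p * (v ^ 2 + v)) + exp (p * (v ^ 2 - v))))).
  - replace (_ + _) with (C * (Rpower (cos (PI * t)) p
                               * (Rpower (/ (1 - v)) p + Rpower (/ (1 + v)) p))) by ring.
    apply Rmult_le_compat_l; [lra|]. apply Rmult_le_compat; lra.
  - rewrite (Rmult_comm 2). apply Rmult_le_compat_l; lra.
Qed.

Lemma Rpower_inv (x p : R) : 0 < x -> Rpower (/ x) p = Rpower x (- p).
Proof. intros Hx. unfold Rpower. rewrite ln_Rinv by assumption. f_equal; ring. Qed.

Lemma ex_series_nonneg_bounded (a : nat -> R) (M : R) :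
  (forall n, 0 <= a n) -> (forall n, sum_n a n <= M) -> ex_series a.
Proof.
  intros Ha HM. destruct (ex_finite_lim_seq_incr (sum_n a) M) as [l Hl]; [|exact HM|].
  - intros n. rewrite sum_Sn. specialize (Ha (S n)). unfold plus; simpl. lra.
  - exists l. exact Hl.
Qed.

Lemma Rpower_succ_le_diff (x p : R) : 0 < x -> 1 < p ->
  Rpower (x + 1) (- p) <= (Rpower x (1 - p) - Rpower (x + 1) (1 - p)) / (p - 1).
Proof.
  intros Hx Hp.
  assert (Hd : forall y, x <= y ->
                 is_derive (fun z => Rpower z (1 - p)) y ((1 - p) * Rpower y (- p))).
  { intros y Hy. apply is_derive_Reals. replace (- p) with (1 - p - 1) by ring.
    apply derivable_pt_lim_power; lra. }
  destruct (MVT_gen (fun z => Rpower z (1 - p)) x (x + 1) (fun y => (1 - p) * Rpower y (- p)))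
    as [c [Hc Hmvt]]; rewrite ?Rmin_left, ?Rmax_right in * by lra.
  - intros y Hy; apply Hd; lra.
  - intros y Hy. apply continuity_pt_filterlim.
    apply (ex_derive_continuous (K := R_AbsRing) (V := R_NormedModule)
             (fun z => Rpower z (1 - p))).
    eexists; apply Hd; lra.
  - assert (Rpower (x + 1) (- p) <= Rpower c (- p)).
    { rewrite !Rpower_Ropp. apply Rinv_le_contravar; [apply Rpower_pos|].
      apply Rle_Rpower_l; lra. }
    apply (Rmult_le_reg_r (p - 1)); [lra|].
    unfold Rdiv. rewrite Rmult_assoc, Rinv_l by lra. nra.
Qed.

Lemma ex_series_Rpower_inv (c p : R) : 0 < c -> 1 < p ->
  ex_series (fun k => Rpower (/ (INR k + c)) p).
Proof.
  intros Hc Hp.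
  assert (Hsums : forall n, sum_n (fun k => Rpower (INR (S k) + c) (- p)) n
                            <= (Rpower c (1 - p) - Rpower (INR n + 1 + c) (1 - p)) / (p - 1)).
  { induction n as [|n IH].
    - rewrite sum_O. replace (INR 1 + c) with (c + 1) by (simpl; ring).
      replace (INR 0 + 1 + c) with (c + 1) by (simpl; ring).
      apply Rpower_succ_le_diff; assumption.
    - rewrite sum_Sn. change (plus ?u ?w) with (u + w).
      pose proof (pos_INR n).
      pose proof (Rpower_succ_le_diff (INR n + 1 + c) p ltac:(lra) Hp).
      rewrite !S_INR. replace (INR n + 1 + 1 + c) with (INR n + 1 + c + 1) by ring.
      unfold Rdiv in *. lra. }
  apply ex_series_ext with (fun k => Rpower (INR k + c) (- p)).
  { intros k. rewrite Rpower_inv; [reflexivity|]. pose proof (pos_INR k); lra. }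
  apply ex_series_incr_1, ex_series_nonneg_bounded with (Rpower c (1 - p) / (p - 1)).
  - intros n. left. apply Rpower_pos.
  - intros n. eapply Rle_trans; [apply Hsums|].
    pose proof (Rpower_pos (INR n + 1 + c) (1 - p)).
    unfold Rdiv. apply Rmult_le_compat_r; [left; apply Rinv_0_lt_compat|]; lra.
Qed.

Lemma ex_series_half_term (p t c : R) : 1 < p -> Rabs t < 1 / 2 -> 0 < c ->
  ex_series (fun k => half_term p t (INR k + c)).
Proof.
  intros Hp Ht Hc.
  apply (ex_series_le (K := R_AbsRing) (V := R_CompleteNormedModule))
    with (fun k => Rpower (/ (INR k + c)) p); [|apply ex_series_Rpower_inv; assumption].
  intros n. pose proof (pos_INR n). pose proof PI_RGT_0. pose proof PI2_1.
  pose proof (cos_PI_mul_pos t Ht). pose proof (COS_bound (PI * t)).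
  change (norm (half_term p t (INR n + c))) with (Rabs (half_term p t (INR n + c))).
  unfold half_term. rewrite Rabs_right by (left; apply Rpower_pos).
  apply Rle_Rpower_l; [lra|]. split; [apply Rdiv_lt_0_compat; nra|].
  unfold Rdiv. rewrite Rinv_mult.
  assert (/ PI < 1) by (rewrite <- Rinv_1; apply Rinv_lt_contravar; lra).
  assert (0 < / PI) by (apply Rinv_0_lt_compat; lra).
  assert (0 < / (INR n + c)) by (apply Rinv_0_lt_compat; lra).
  assert (cos (PI * t) * / PI <= 1) by nra.
  nra.
Qed.

Lemma Rabs_sin_sub_IZR_mul_PI (z : R) (n : Z) : Rabs (sin (z - IZR n * PI)) = Rabs (sin z).
Proof.
  induction n as [|n IH|n IH] using Z.peano_ind.
  - rewrite Rmult_0_l, Rminus_0_r; reflexivity.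
  - rewrite succ_IZR, <- IH, <- Rabs_Ropp.
    replace (z - (IZR n + 1) * PI) with (z - IZR n * PI - PI) by ring.
    rewrite sin_minus, sin_PI, cos_PI. f_equal; ring.
  - rewrite <- Z.sub_1_r, minus_IZR, <- IH.
    replace (z - (IZR n - 1) * PI) with (z - IZR n * PI + PI) by ring.
    rewrite neg_sin, Rabs_Ropp; reflexivity.
Qed.

Lemma abs_pow_sinc (y p : R) : sin (PI * y) <> 0 ->
  abs_pow (sinc y) p = Rpower (Rabs (sin (PI * y)) / (PI * Rabs y)) p.
Proof.
  intros Hsin. pose proof PI_RGT_0.
  assert (Hy : y <> 0) by (intros ->; apply Hsin; rewrite Rmult_0_r; apply sin_0).
  assert (Habs : Rabs (sin (PI * y) / (PI * y)) = Rabs (sin (PI * y)) / (PI * Rabs y)).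
  { unfold Rdiv. rewrite Rabs_mult, Rabs_inv, Rabs_mult, (Rabs_right PI) by lra. reflexivity. }
  unfold abs_pow, sinc. destruct (Req_EM_T y 0) as [|_]; [contradiction|].
  destruct (Req_EM_T (sin (PI * y) / (PI * y)) 0) as [Hzero|_].
  - exfalso. apply Hsin. unfold Rdiv in Hzero.
    apply Rmult_integral in Hzero as [|Hinv]; [assumption|].
    exfalso. apply (Rinv_neq_0_compat (PI * y)); [|assumption].
    apply Rmult_integral_contrapositive; split; lra.
  - rewrite Habs; reflexivity.
Qed.

Lemma h_term_near (p : R) (N : nat) (x : R) (n : Z) :
  Rabs (x - IZR n) <= INR N -> h_term p N x n = 0.
Proof. intros H. unfold h_term. destruct (Rlt_dec _ _); [lra|reflexivity]. Qed.

Lemma h_term_half_add (p t : R) (N : nat) (n : Z) :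
  Rabs t < 1 / 2 -> INR N < Rabs (1 / 2 + t - IZR n) ->
  h_term p N (1 / 2 + t) n = half_term p t (Rabs (1 / 2 + t - IZR n)).
Proof.
  intros Ht Hfar. pose proof (cos_PI_mul_pos t Ht) as Hcos.
  assert (Hsin : Rabs (sin (PI * (1 / 2 + t - IZR n))) = cos (PI * t)).
  { replace (PI * (1 / 2 + t - IZR n)) with (PI / 2 + PI * t - IZR n * PI) by field.
    rewrite Rabs_sin_sub_IZR_mul_PI, <- cos_sin, Rabs_right by lra. reflexivity. }
  unfold h_term. destruct (Rlt_dec _ _) as [_|]; [|contradiction].
  rewrite abs_pow_sinc, Hsin; [reflexivity|].
  intros Hzero. rewrite Hzero, Rabs_R0 in Hsin. lra.
Qed.

Lemma h_half_add (p t : R) (N : nat) : (1 <= N)%nat -> Rabs t < 1 / 2 ->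
  h p N (1 / 2 + t) = Series (fun k => half_term p t (INR (N + k) + 1 / 2 - t))
                      + Series (fun k => half_term p t (INR (N + k) + 1 / 2 + t)).
Proof.
  intros HN Ht. pose proof Ht as Ht'. apply Rabs_lt_between in Ht'.
  destruct N as [|M]; [lia|]. unfold h. f_equal.
  - rewrite (Series_incr_n_aux _ (S (S M))).
    + apply Series_ext. intros k.
      assert (Hd : Rabs (1 / 2 + t - IZR (Z.of_nat (S (S M) + k)))
                   = INR (S M + k) + 1 / 2 - t).
      { rewrite <- INR_IZR_INZ, Rabs_left; rewrite !plus_INR, !S_INR;
          pose proof (pos_INR M); pose proof (pos_INR k); lra. }
      rewrite h_term_half_add, Hd; [reflexivity|assumption|].
      rewrite Hd, plus_INR, S_INR. pose proof (pos_INR k). lra.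
    + intros k Hk. apply h_term_near. rewrite <- INR_IZR_INZ.
      assert (INR k <= INR (S M)) by (apply le_INR; lia).
      rewrite S_INR in *. pose proof (pos_INR M). pose proof (pos_INR k).
      apply Rabs_le_between. lra.
  - rewrite (Series_incr_n_aux _ M).
    + apply Series_ext. intros k.
      assert (Hd : Rabs (1 / 2 + t - IZR (- Z.of_nat (M + k) - 1))
                   = INR (S M + k) + 1 / 2 + t).
      { rewrite minus_IZR, opp_IZR, <- INR_IZR_INZ, Rabs_right; rewrite !plus_INR, ?S_INR;
          pose proof (pos_INR M); pose proof (pos_INR k); lra. }
      rewrite h_term_half_add, Hd; [reflexivity|assumption|].
      rewrite Hd, plus_INR. pose proof (pos_INR k). lra.
    + intros k Hk. apply h_term_near.
      rewrite minus_IZR, opp_IZR, <- INR_IZR_INZ.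
      apply le_INR in Hk. rewrite S_INR in *. pose proof (pos_INR k).
      apply Rabs_le_between. lra.
Qed.

Lemma local_max_point_h_half (p : R) (N : nat) : 1 < p -> (1 <= N)%nat ->
  p + 2 <= (PI * (INR N + 1 / 2)) ^ 2 -> local_max_point (h p N) (1 / 2).
Proof.
  intros Hp HN HpN.
  pose proof PI_RGT_0. pose proof (le_INR 1 N HN) as HN1. simpl in HN1.
  assert (Hex : forall u s, Rabs u < 1 / 2 -> Rabs s < 1 / 2 ->
                 ex_series (fun k => half_term p u (INR (N + k) + 1 / 2 + s))).
  { intros u s Hu Hs. apply Rabs_lt_between in Hs.
    apply ex_series_ext with (fun k => half_term p u (INR k + (INR N + 1 / 2 + s))).
    - intros k. rewrite plus_INR. f_equal. ring.
    - apply ex_series_half_term; [assumption|assumption|lra]. }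
  assert (H0 : Rabs 0 < 1 / 2) by (rewrite Rabs_R0; lra).
  exists (1 / 2). split; [lra|]. intros x Hx.
  rewrite <- (Rplus_0_r (1 / 2)).
  replace x with (1 / 2 + (x - 1 / 2)) by ring.
  set (t := x - 1 / 2) in *.
  assert (Ht : Rabs (- t) < 1 / 2) by (rewrite Rabs_Ropp; assumption).
  rewrite !h_half_add by assumption. unfold Rminus.
  assert (H0' : Rabs (- 0) < 1 / 2) by (rewrite Ropp_0; assumption).
  rewrite <- (Series_plus _ _ (Hex t (- t) Hx Ht) (Hex t t Hx Hx)),
          <- (Series_plus _ _ (Hex 0 (- 0) H0 H0') (Hex 0 0 H0 H0)).
  apply Series_le; [|exact (ex_series_plus _ _ (Hex 0 (- 0) H0 H0') (Hex 0 0 H0 H0))].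
  intros k. rewrite Ropp_0, Rplus_0_r, Rplus_diag.
  set (b := INR (N + k) + 1 / 2). change (b + - t) with (b - t).
  split.
  - unfold half_term.
    pose proof (Rpower_pos (cos (PI * t) / (PI * (b - t))) p).
    pose proof (Rpower_pos (cos (PI * t) / (PI * (b + t))) p). lra.
  - pose proof (le_INR N (N + k) ltac:(lia)).
    apply half_term_pair_le; try (unfold b; lra).
    eapply Rle_trans; [exact HpN|]. apply pow_incr. unfold b. split; nra.
Qed.

Lemma sq_bound_of_threshold (p x : R) : 0 < p ->
  / PI * sqrt ((p + 2) * (1 + / p)) - / 2 <= x -> p + 2 <= (PI * (x + 1 / 2)) ^ 2.
Proof.
  intros Hp Hx. pose proof PI_RGT_0.
  set (S := (p + 2) * (1 + / p)) in *.
  assert (HS : p + 2 <= S).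
  { unfold S. assert (0 < / p) by (apply Rinv_0_lt_compat; lra). nra. }
  pose proof (sqrt_sqrt S ltac:(lra)). pose proof (sqrt_pos S).
  assert (sqrt S <= PI * (x + 1 / 2)).
  { replace (sqrt S) with (PI * (/ PI * sqrt S)) by (field; lra).
    apply Rmult_le_compat_l; lra. }
  nra.
Qed.

Lemma threshold_le_one (p : R) : 1 < p ->
  p <= / 8 * (9 * PI ^ 2 + sqrt (16 - 216 * PI ^ 2 + 81 * PI ^ 4) - 12) ->
  / PI * sqrt ((p + 2) * (1 + / p)) - / 2 <= 1.
Proof.
  intros Hp Hbound. pose proof PI_RGT_0. pose proof PI2_1.
  set (D := 16 - 216 * PI ^ 2 + 81 * PI ^ 4) in *.
  assert (Hpi2 : 4 < PI ^ 2) by nra.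
  assert (HD : 0 <= D) by (unfold D; nra).
  pose proof (sqrt_sqrt D HD). pose proof (sqrt_pos D).
  (* (p + 2) (1 + 1/p) <= (3 PI / 2)^2 means 4 p^2 - (9 PI^2 - 12) p + 8 <= 0, whose roots
     have discriminant D; the bound on p is the larger root and the smaller one is below 1. *)
  assert (Hroot : 9 * PI ^ 2 - 20 <= sqrt D).
  { apply Rsqr_incr_0_var; [unfold Rsqr, D in *; nra| assumption]. }
  assert (Hq : 4 * p ^ 2 - (9 * PI ^ 2 - 12) * p + 8 <= 0).
  { assert ((8 * p - (9 * PI ^ 2 - 12)) ^ 2 <= D) by nra.
    unfold D in *. nra. }
  set (S := (p + 2) * (1 + / p)).
  assert (HS : p * S = p ^ 2 + 3 * p + 2) by (unfold S; field; lra).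
  assert (0 < S) by (unfold S; assert (0 < / p) by (apply Rinv_0_lt_compat; lra); nra).
  assert (HS2 : S <= (3 * PI / 2) ^ 2) by nra.
  assert (sqrt S <= 3 * PI / 2).
  { rewrite <- (sqrt_pow2 (3 * PI / 2)) by lra. apply sqrt_le_1_alt. assumption. }
  assert (/ PI * sqrt S <= / PI * (3 * PI / 2))
    by (apply Rmult_le_compat_l; [left; apply Rinv_0_lt_compat|]; lra).
  replace (/ PI * (3 * PI / 2)) with (3 / 2) in * by (field; lra).
  lra.
Qed.

Theorem corollary1 (p : R) (hp : 1 < p) :
  (forall N : nat, (1 <= N)%nat ->
     / PI * sqrt ((p + 2) * (1 + / p)) - / 2 <= INR N ->
     local_max_point (h p N) (1 / 2))
  /\
  (p <= / 8 * (9 * PI ^ 2 + sqrt (16 - 216 * PI ^ 2 + 81 * PI ^ 4) - 12) ->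
     forall N : nat, (1 <= N)%nat -> local_max_point (h p N) (1 / 2)).
Proof.
  assert (Ha : forall N : nat, (1 <= N)%nat ->
             / PI * sqrt ((p + 2) * (1 + / p)) - / 2 <= INR N ->
             local_max_point (h p N) (1 / 2)).
  { intros N HN Hthreshold. apply local_max_point_h_half; [assumption|assumption|].
    apply sq_bound_of_threshold; [lra|assumption]. }
  split; [exact Ha|].
  intros Hbound N HN. apply Ha; [assumption|].
  pose proof (threshold_le_one p hp Hbound). pose proof (le_INR 1 N HN). simpl in *. lra.
Qed.
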